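(* For $m\ge 2$, let $h_m^{+}$ and $h_m^{-}$ denote respectively the largest and the smallest number of matching coalescent histories of a species tree with $m$ leaves, the maximum and minimum being taken over all species trees with $m$ leaves, and let $R(m)=h_m^{+}/h_m^{-}$. Then for every odd $m\ge 7$, $$R(m)\ge\left(\frac{\sqrt{m-1}}{4\sqrt{e}}\right)^{m}.$$
   Context: A species tree is a rooted binary tree whose leaves carry distinct labels. Each node $v$ of a tree $t$ has a branch directly above it: for a non-root node this is the edge joining $v$ to its parent, and the root additionally has a root branch above it. A leaf $x$ descends from a branch if $x$ lies in the subtree below that branch. A branch $b'$ is descended from a branch $b$ if the node at the lower end of $b'$ lies in the subtree below $b$. Given a species tree $t$, a matching coalescent history of $t$ is a map $h$ from the set of internal nodes of $t$ to the set of branches of $t$ such that: (a) for every leaf $x$ and internal node $k$, if $x$ descends from $k$ then $x$ descends from the branch $h(k)$; (b) for all internal nodes $k_1,k_2$, if $k_2$ is a descendant of $k_1$ then $h(k_2)$ is descended from or coincides with $h(k_1)$. The number of matching coalescent histories depends only on the unlabeled shape of the tree. *)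

From mathcomp Require Import all_boot.
From Stdlib Require Import Reals.

Set Implicit Arguments.
Unset Strict Implicit.
Unset Printing Implicit Defensive.

(* The number of matching coalescent
   histories depends only on the shape, and every shape with m leaves
   admits a labeling by m distinct labels, so max/min over labeled species
   trees with m leaves equal max/min over shapes with m leaves. *)
Inductive tree : Type := Leaf | Node of tree & tree.

Fixpoint nleaves (t : tree) : nat :=
  match t with Leaf => 1 | Node l r => nleaves l + nleaves r end.

(* Nodes are identified by their address: the path from the root
   (false = left child, true = right child).  The subtree below node
   (equivalently, below the branch above node) with address a consists of
   the nodes whose address has a as a prefix. *)
Fixpoint nodes (t : tree) : seq (seq bool) :=
  match t with
  | Leaf => [:: [::]]
  | Node l r => [::] :: map (cons false) (nodes l) ++ map (cons true) (nodes r)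
  end.

Fixpoint inodes (t : tree) : seq (seq bool) :=
  match t with
  | Leaf => [::]
  | Node l r => [::] :: map (cons false) (inodes l) ++ map (cons true) (inodes r)
  end.

Fixpoint leaves (t : tree) : seq (seq bool) :=
  match t with
  | Leaf => [:: [::]]
  | Node l r => map (cons false) (leaves l) ++ map (cons true) (leaves r)
  end.

Definition below (x y : seq bool) : bool := prefix x y.

(* internal nodes of t, and branches of t (one branch above each node) *)
Definition INode (t : tree) := seq_sub (inodes t).
Definition Branch (t : tree) := seq_sub (nodes t).

Definition is_mch (t : tree) (h : {ffun INode t -> Branch t}) : bool :=
  [forall k : INode t,
     all (fun x => below (ssval k) x ==> below (ssval (h k)) x) (leaves t)]
  && [forall k1 : INode t, forall k2 : INode t,
        below (ssval k1) (ssval k2) ==> below (ssval (h k1)) (ssval (h k2))].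

Definition nmch (t : tree) : nat :=
  #|[pred h : {ffun INode t -> Branch t} | is_mch h]|.

Definition is_hplus (m v : nat) : Prop :=
  (exists t, nleaves t = m /\ nmch t = v) /\
  (forall t, nleaves t = m -> nmch t <= v).

Definition is_hminus (m v : nat) : Prop :=
  (exists t, nleaves t = m /\ nmch t = v) /\
  (forall t, nleaves t = m -> v <= nmch t).

(** A matching coalescent history sends each internal node [k] to a branch on the path
    from the root to [k], and the depth of that branch can only grow down the tree; so
    histories are the monotone depth assignments [d] with [d k <= |k|], and splitting at
    the root shows that they are counted by [nhist t 0], where
    [nhist (Node l r) n = sum_(1 <= q <= n+1) nhist l q * nhist r q].
    For [m = 2k+1] leaves, the caterpillar has at most [16^k] histories, while the
    lodgepole with [k] cherries has at least [2^k k!]: by the hockey-stick identity its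
    count dominates a rising factorial divided by [1*3*...*(2k+1)].  The claimed ratio
    then reduces to [k^(2k+1) <= 8 e^(2k+1) (k!)^2], a weak Stirling bound obtained by
    induction from [(1 + 1/k)^(2k) (1 + 1/(k+10)) <= e^2]. *)

From Stdlib Require Import Reals Arith Lia Lra Psatz.

Section StirlingBound.
Local Open Scope R_scope.

Lemma exp_ge_taylor3 z : 0 <= z -> 1 + z + z ^ 2 / 2 + z ^ 3 / 6 <= exp z.
Proof.
intro Hz.
assert (Hgrow : Un_growing (E1 z)).
{ intro n. unfold E1. rewrite tech5.
  assert (0 <= / INR (fact (S n)) * z ^ S n).
  { apply Rmult_le_pos; [left; apply Rinv_0_lt_compat, INR_fact_lt_0 | apply pow_le; lra]. }
  lra. }
pose proof (growing_ineq (E1 z) (exp z) Hgrow (E1_cvg z) 3) as H.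
unfold E1 in H. simpl in H. lra.
Qed.

Lemma one_plus_le_exp_cubic y : 0 <= y <= 1 -> 1 + y <= exp (y - y ^ 2 / 2 + y ^ 3 / 3).
Proof.
intros [Hy0 Hy1].
set (z := y - y ^ 2 / 2 + y ^ 3 / 3).
assert (Hz : 0 <= z) by (unfold z; nra).
pose proof (exp_ge_taylor3 z Hz).
set (c := 5/24 + y/8 - 19/144*y^2 + 7/72*y^3 - y^4/36 + y^5/162).
assert (Etaylor : z + z ^ 2 / 2 + z ^ 3 / 6 - y = y ^ 4 * c) by (unfold z, c; field).
assert (Hc : 0 <= c).
{ assert (0 <= y ^ 2 <= 1) by nra.
  assert (0 <= y ^ 3) by (apply pow_le; lra).
  assert (y ^ 4 <= y ^ 3) by (simpl; nra).
  assert (0 <= y ^ 5) by (apply pow_le; lra).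
  unfold c; nra. }
assert (0 <= y ^ 4 * c) by (apply Rmult_le_pos; [apply pow_le; lra | exact Hc]).
lra.
Qed.

Lemma exp_pow x n : exp x ^ n = exp (INR n * x).
Proof.
induction n as [|n IH]; simpl pow.
- rewrite Rmult_0_l, exp_0; reflexivity.
- rewrite IH, <- exp_plus, S_INR; f_equal; ring.
Qed.

Lemma exp_le_exp x y : x <= y -> exp x <= exp y.
Proof.
intros [Hlt|Heq]; [left; apply exp_increasing, Hlt | rewrite Heq; right; reflexivity].
Qed.

Lemma exp_2 : exp 2 = exp 1 ^ 2.
Proof. rewrite exp_pow; f_equal; simpl; ring. Qed.

Lemma pow_inv_succ_le_exp k : (1 <= k)%nat ->
  (1 + 1 / INR k) ^ (2 * k) * (1 + 1 / (INR k + 10)) <= exp 2.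
Proof.
intro hk. assert (Hk : 1 <= INR k) by (apply (le_INR 1); lia).
set (y := 1 / INR k).
assert (Hy : 0 <= y <= 1).
{ unfold y; split; [apply Rlt_le, Rdiv_lt_0_compat; lra|].
  apply (Rmult_le_reg_r (INR k)); [lra|]. field_simplify; lra. }
assert (Hinv10 : 0 < 1 / (INR k + 10)) by (apply Rdiv_lt_0_compat; lra).
apply Rle_trans with (exp (y - y ^ 2 / 2 + y ^ 3 / 3) ^ (2 * k) * exp (1 / (INR k + 10))).
{ pose proof (one_plus_le_exp_cubic y Hy).
  pose proof (exp_ineq1_le (1 / (INR k + 10))).
  apply Rmult_le_compat; [apply pow_le; lra | lra | apply pow_incr; lra | lra]. }
rewrite exp_pow, <- exp_plus. apply exp_le_exp.
rewrite mult_INR; change (INR 2) with 2.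
(* the exponent falls short of 2 by a positive rational function of k *)
assert (E : 2 * INR k * (y - y ^ 2 / 2 + y ^ 3 / 3) + 1 / (INR k + 10) =
   2 - (28 * INR k - 20) / (3 * INR k * INR k * (INR k + 10))) by (unfold y; field; lra).
rewrite E.
assert (0 <= (28 * INR k - 20) / (3 * INR k * INR k * (INR k + 10))).
{ apply Rmult_le_pos; [lra|].
  left; apply Rinv_0_lt_compat, Rmult_lt_0_compat; [nra | lra]. }
lra.
Qed.

Lemma stirling_step k : (1 <= k)%nat ->
  INR (S k) ^ (2 * k) * (INR k + 11) <= exp 1 ^ 2 * (INR k ^ (2 * k) * (INR k + 10)).
Proof.
intro hk. assert (Hk : 1 <= INR k) by (apply (le_INR 1); lia).
assert (E : INR (S k) ^ (2 * k) * (INR k + 11) =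
   (INR k ^ (2 * k) * (INR k + 10)) * ((1 + 1 / INR k) ^ (2 * k) * (1 + 1 / (INR k + 10)))).
{ replace (1 + 1 / INR k) with (INR (S k) * / INR k) by (rewrite S_INR; field; lra).
  rewrite Rpow_mult_distr, pow_inv, S_INR.
  field; split; [lra | apply pow_nonzero; lra]. }
rewrite E, <- exp_2, (Rmult_comm (exp 2)).
apply Rmult_le_compat_l; [apply Rmult_le_pos; [apply pow_le|]; lra|].
exact (pow_inv_succ_le_exp k hk).
Qed.

Lemma fact_sq_ge k : (1 <= k)%nat ->
  exp 1 ^ 2 * (INR k ^ (2 * k) * (INR k + 10)) <= 11 * INR (fact k) ^ 2 * exp 1 ^ (2 * k).
Proof.
induction k as [|k IH]; intro hk; [lia|].
destruct (Nat.eq_dec k 0) as [->|Hk0]; [simpl; lra|].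
specialize (IH ltac:(lia)).
assert (Hk : 1 <= INR k) by (apply (le_INR 1); lia).
pose proof (stirling_step k ltac:(lia)) as Hstep.
replace (2 * S k)%nat with (2 + 2 * k)%nat by lia.
rewrite !pow_add, fact_simpl, mult_INR.
replace (INR (S k) + 10) with (INR k + 11) by (rewrite S_INR; ring).
assert (He2 : 0 < exp 1 ^ 2) by (apply pow_lt, exp_pos).
assert (0 < INR (S k) ^ 2) by (apply pow_lt; rewrite S_INR; lra).
apply Rle_trans with (exp 1 ^ 2 * INR (S k) ^ 2 * (INR (S k) ^ (2 * k) * (INR k + 11))).
{ right; ring. }
apply Rle_trans with (exp 1 ^ 2 * INR (S k) ^ 2 * (exp 1 ^ 2 * (INR k ^ (2 * k) * (INR k + 10)))).
{ apply Rmult_le_compat_l; [nra | exact Hstep]. }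
apply Rle_trans with (exp 1 ^ 2 * INR (S k) ^ 2 * (11 * INR (fact k) ^ 2 * exp 1 ^ (2 * k))).
{ apply Rmult_le_compat_l; [nra | exact IH]. }
right; simpl; ring.
Qed.

Lemma pow_le_fact_sq k : (1 <= k)%nat ->
  INR k ^ (2 * k + 1) <= 8 * exp 1 ^ (2 * k + 1) * INR (fact k) ^ 2.
Proof.
intro hk. assert (Hk : 1 <= INR k) by (apply (le_INR 1); lia).
pose proof (fact_sq_ge k hk) as Hfact.
assert (He : 2 <= exp 1) by (pose proof (exp_ineq1_le 1); lra).
assert (He2 : 0 < exp 1 ^ 2) by (apply pow_lt; lra).
assert (Hpos : 0 <= INR (fact k) ^ 2 * exp 1 ^ (2 * k)).
{ apply Rmult_le_pos; apply pow_le; [apply pos_INR | lra]. }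
assert (Hkk : 0 <= INR k ^ (2 * k)) by (apply pow_le; lra).
apply (Rmult_le_reg_l (exp 1 ^ 2)); [exact He2|].
rewrite !pow_add, !pow_1.
apply Rle_trans with (exp 1 ^ 2 * (INR k ^ (2 * k) * (INR k + 10))); [nra|].
apply (Rle_trans _ _ _ Hfact).
assert (11 <= 8 * exp 1 ^ 3) by (simpl; nra).
apply Rle_trans with ((8 * exp 1 ^ 3) * (INR (fact k) ^ 2 * exp 1 ^ (2 * k))); [nra|].
right; simpl; ring.
Qed.

Lemma sqrt_ratio_sqr k :
  (sqrt (INR (2 * k + 1) - 1) / (4 * sqrt (exp 1))) ^ 2 = INR k / (8 * exp 1).
Proof.
assert (He : 0 < exp 1) by apply exp_pos.
assert (Hse : 0 < sqrt (exp 1)) by (apply sqrt_lt_R0; lra).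
assert (Hk : 0 <= 2 * INR k) by (pose proof (pos_INR k); lra).
replace (INR (2 * k + 1) - 1) with (2 * INR k) by (rewrite plus_INR, mult_INR; simpl; ring).
unfold Rdiv; rewrite Rpow_mult_distr, pow_inv.
replace ((4 * sqrt (exp 1)) ^ 2) with (16 * (sqrt (exp 1) * sqrt (exp 1))) by ring.
simpl; rewrite Rmult_1_r, !sqrt_sqrt by lra; field; lra.
Qed.

Lemma sqrt_ratio_pow_le k : (1 <= k)%nat ->
  (sqrt (INR (2 * k + 1) - 1) / (4 * sqrt (exp 1))) ^ (2 * k + 1)
    <= 2 ^ k * INR (fact k) / 16 ^ k.
Proof.
intro hk.
assert (He : 0 < exp 1) by apply exp_pos.
assert (Hse : 0 < sqrt (exp 1)) by (apply sqrt_lt_R0; lra).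
assert (H8 : 0 < 8 ^ (2 * k)) by (apply pow_lt; lra).
assert (HF : 0 < INR (fact k)) by apply INR_fact_lt_0.
set (a := sqrt (INR (2 * k + 1) - 1) / (4 * sqrt (exp 1))).
set (X := 2 ^ k * INR (fact k) / 16 ^ k).
assert (Ha0 : 0 <= a).
{ apply Rmult_le_pos; [apply sqrt_pos | left; apply Rinv_0_lt_compat; lra]. }
assert (HX : X = INR (fact k) / 8 ^ k).
{ unfold X; replace 16 with (2 * 8) by ring; rewrite Rpow_mult_distr.
  field; split; apply pow_nonzero; lra. }
assert (HX0 : 0 <= X).
{ rewrite HX; apply Rmult_le_pos; [lra | left; apply Rinv_0_lt_compat, pow_lt; lra]. }
apply Rsqr_incr_0_var; [|exact HX0].
unfold Rsqr.
replace (a ^ (2 * k + 1) * a ^ (2 * k + 1)) with ((a ^ 2) ^ (2 * k + 1))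
  by (rewrite <- pow_mult, <- pow_add; f_equal; lia).
unfold a; rewrite sqrt_ratio_sqr, HX.
replace ((INR k / (8 * exp 1)) ^ (2 * k + 1))
  with (INR k ^ (2 * k + 1) / (8 ^ (2 * k) * (8 * exp 1 ^ (2 * k + 1)))).
2:{ unfold Rdiv; rewrite Rpow_mult_distr, pow_inv, Rpow_mult_distr, (pow_add 8), pow_1.
    field; split; apply pow_nonzero; lra. }
replace (INR (fact k) / 8 ^ k * (INR (fact k) / 8 ^ k))
  with (8 * exp 1 ^ (2 * k + 1) * INR (fact k) ^ 2 / (8 ^ (2 * k) * (8 * exp 1 ^ (2 * k + 1)))).
2:{ replace (8 ^ (2 * k)) with (8 ^ k * 8 ^ k) by (rewrite <- pow_add; f_equal; lia).
    field; split; apply pow_nonzero; lra. }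
apply Rmult_le_compat_r; [|exact (pow_le_fact_sq k hk)].
left; apply Rinv_0_lt_compat, Rmult_lt_0_compat; [exact H8|].
apply Rmult_lt_0_compat; [lra | apply pow_lt; lra].
Qed.

Lemma Rdiv_le_compat a b c d : 0 <= a -> a <= b -> 0 < d -> d <= c -> a / c <= b / d.
Proof.
intros Ha Hab Hd Hdc; unfold Rdiv.
apply Rmult_le_compat; [exact Ha | left; apply Rinv_0_lt_compat; lra | exact Hab |].
apply Rinv_le_contravar; [exact Hd | exact Hdc].
Qed.

End StirlingBound.

From mathcomp Require Import all_boot zify.

Set Implicit Arguments.
Unset Strict Implicit.
Unset Printing Implicit Defensive.

Lemma mem_map_cons (b c : bool) (k : seq bool) (s : seq (seq bool)) :
  (b :: k \in map (cons c) s) = (b == c) && (k \in s).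
Proof.
have [->|neq_bc] := eqVneq b c; first by rewrite mem_map // => x y [].
by apply/mapP => -[y _ [eq_bc _]]; rewrite eq_bc eqxx in neq_bc.
Qed.

Lemma mem_inodes_Node l r k : k \in inodes (Node l r) =
  if k is b :: k' then k' \in inodes (if b then r else l) else true.
Proof. by case: k => [|[] k]; rewrite in_cons mem_cat ?mem_map_cons //= orbF. Qed.

Lemma mem_nodes_Node l r k : k \in nodes (Node l r) =
  if k is b :: k' then k' \in nodes (if b then r else l) else true.
Proof. by case: k => [|[] k]; rewrite in_cons mem_cat ?mem_map_cons //= orbF. Qed.

Lemma mem_leaves_Node l r k : k \in leaves (Node l r) =
  if k is b :: k' then k' \in leaves (if b then r else l) else false.
Proof.
case: k => [|[] k]; rewrite mem_cat ?mem_map_cons //= ?orbF //.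
by apply/orP => -[] /mapP [].
Qed.

Lemma nodes_nil t : [::] \in nodes t.
Proof. by case: t. Qed.

Lemma inodes_sub_nodes t : {subset inodes t <= nodes t}.
Proof.
elim: t => [|l IHl r IHr] // [|[] k] //; rewrite mem_inodes_Node mem_nodes_Node.
- exact: IHr.
- exact: IHl.
Qed.

Lemma nodes_prefix_closed t p k : prefix p k -> k \in nodes t -> p \in nodes t.
Proof.
elim: t p k => [|l IHl r IHr] p k.
  by rewrite inE => + /eqP eq_k; rewrite eq_k prefixs0 => /eqP ->.
case: p => [|b p]; first by rewrite nodes_nil.
case: k => [|c k] //= /andP [/eqP <-]; rewrite !mem_nodes_Node.
by case: b; [apply: IHr | apply: IHl].
Qed.

Lemma leaf_below_node t k : k \in nodes t -> exists2 x, x \in leaves t & prefix k x.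
Proof.
elim: t k => [|l IHl r IHr] k.
  by rewrite inE => /eqP ->; exists [::].
rewrite mem_nodes_Node; case: k => [|[] k] k_in.
- have [x x_in _] := IHl _ (nodes_nil l).
  by exists (false :: x); rewrite ?mem_leaves_Node.
- have [x x_in k_x] := IHr _ k_in.
  by exists (true :: x); rewrite ?mem_leaves_Node //= eqxx.
- have [x x_in k_x] := IHl _ k_in.
  by exists (false :: x); rewrite ?mem_leaves_Node //= eqxx.
Qed.

Lemma leaf_below_child t k (b : bool) : k \in inodes t ->
  exists2 x, x \in leaves t & prefix (rcons k b) x.
Proof.
elim: t k => [|l IHl r IHr] k //.
rewrite mem_inodes_Node; case: k => [|[] k] k_in.
- have [x x_in _] := leaf_below_node (nodes_nil (if b then r else l)).
  by exists (b :: x); rewrite ?mem_leaves_Node //= prefix0s andbT.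
- have [x x_in k_x] := IHr _ k_in.
  by exists (true :: x); rewrite ?mem_leaves_Node //= eqxx.
- have [x x_in k_x] := IHl _ k_in.
  by exists (false :: x); rewrite ?mem_leaves_Node //= eqxx.
Qed.

Lemma prefix_fork (p k s1 s2 : seq bool) :
  prefix p (k ++ false :: s1) -> prefix p (k ++ true :: s2) -> prefix p k.
Proof.
elim: k p => [|c k IHk] [|d p] //=; first by case: d.
by case/andP => /eqP -> p_k1 /andP [_ p_k2]; rewrite eqxx (IHk _ p_k1 p_k2).
Qed.

Lemma prefix_sizeE (T : eqType) (p1 p2 s : seq T) :
  prefix p1 s -> prefix p2 s -> prefix p1 p2 = (size p1 <= size p2).
Proof.
elim: s p1 p2 => [|c s IHs] [|d1 p1] [|d2 p2] //=.
by case/andP => /eqP -> p1_s /andP [/eqP -> p2_s]; rewrite eqxx IHs.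
Qed.

Lemma prefix_size_inj (T : eqType) (p1 p2 s : seq T) :
  prefix p1 s -> prefix p2 s -> size p1 = size p2 -> p1 = p2.
Proof.
by move=> + + eq_size; rewrite !prefixE eq_size => /eqP <- /eqP.
Qed.

Section MatchingHistories.
Variable t : tree.
Implicit Types (h : {ffun INode t -> Branch t}) (k : INode t).

(* [h k] is an ancestor of leaves on both sides of [k], hence of [k] itself. *)
Lemma mch_prefix h k : is_mch h -> prefix (val (h k)) (val k).
Proof.
case/andP => /forallP/(_ k)/allP below_h _.
have [x x_in k0_x] := leaf_below_child false (valP k).
have [y y_in k1_y] := leaf_below_child true (valP k).
have := below_h y y_in; rewrite /below (prefix_trans (prefix_rcons _ _) k1_y) /=.
have := below_h x x_in; rewrite /below (prefix_trans (prefix_rcons _ _) k0_x) /=.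
case/prefixP: k0_x => s1 ->; case/prefixP: k1_y => s2 ->; rewrite !cat_rcons.
exact: prefix_fork.
Qed.

Lemma mchP h : is_mch h <->
  (forall k, prefix (val (h k)) (val k)) /\
  (forall k1 k2, prefix (val k1) (val k2) -> size (val (h k1)) <= size (val (h k2))).
Proof.
split=> [mch_h | [h_prefix h_mono]].
  split=> [k|k1 k2 k1_k2]; first exact: mch_prefix.
  case/andP: mch_h => _ /forallP/(_ k1)/forallP/(_ k2).
  by rewrite /below k1_k2 => /size_prefix.
apply/andP; split; apply/forallP => k1.
  by apply/allP => x _; apply/implyP; apply: prefix_trans (h_prefix k1).
apply/forallP => k2; apply/implyP => k1_k2.
by rewrite /below (prefix_sizeE (prefix_trans (h_prefix k1) k1_k2) (h_prefix k2)) h_mono.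
Qed.

End MatchingHistories.

(* [nhist t n] counts the monotone depth assignments [d] on the internal nodes of [t] with
   [d k <= size k + n], i.e. histories of [t] hung below [n] extra branches above its root. *)
Fixpoint nhist (t : tree) (n : nat) : nat :=
  match t with
  | Leaf => 1
  | Node l r => \sum_(1 <= q < n.+2) nhist l q * nhist r q
  end.

Lemma nhist_Node l r n : nhist (Node l r) n = \sum_(1 <= q < n.+2) nhist l q * nhist r q.
Proof. by []. Qed.

Definition depth_profile t n (d : seq bool -> nat) : Prop :=
  {in inodes t, forall k, d k <= size k + n} /\
  {in inodes t &, forall k1 k2, prefix k1 k2 -> d k1 <= d k2}.

Definition cons_profile x (a b : seq nat) : seq nat :=
  x :: map (addn x) a ++ map (addn x) b.

(* Lists each [map d (inodes t)], [d] a depth profile; below a root of depth [n.+1 - q]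
   the profiles of the two subtrees are relative to that depth and have [q] spare branches. *)
Fixpoint profiles t n : seq (seq nat) :=
  match t with
  | Leaf => [:: [::]]
  | Node l r =>
      flatten [seq [seq cons_profile (n.+1 - q) a b | a <- profiles l q, b <- profiles r q]
              | q <- iota 1 n.+1]
  end.

Lemma profiles_Node l r n : profiles (Node l r) n =
  flatten [seq [seq cons_profile (n.+1 - q) a b | a <- profiles l q, b <- profiles r q]
          | q <- iota 1 n.+1].
Proof. by []. Qed.

Definition node_depth x (dl dr : seq bool -> nat) (k : seq bool) : nat :=
  if k is b :: k' then x + (if b then dr else dl) k' else x.

Lemma map_node_depth l r x dl dr :
  map (node_depth x dl dr) (inodes (Node l r)) =
  cons_profile x (map dl (inodes l)) (map dr (inodes r)).
Proof. by rewrite /= map_cat /cons_profile -!map_comp. Qed.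

Lemma depth_profile_Node l r n q dl dr :
  0 < q <= n.+1 -> depth_profile l q dl -> depth_profile r q dr ->
  depth_profile (Node l r) n (node_depth (n.+1 - q) dl dr).
Proof.
move=> /andP [q_gt0 q_le] [bound_l mono_l] [bound_r mono_r]; split.
  move=> [|[] k]; rewrite mem_inodes_Node => k_in /=; first lia.
  - by have := bound_r k k_in; lia.
  - by have := bound_l k k_in; lia.
move=> [|[] k1] [|[] k2]; rewrite !mem_inodes_Node => k1_in k2_in /=.
all: rewrite ?leq_addr // leq_add2l.
- exact: mono_r.
- exact: mono_l.
Qed.

Lemma depth_profile_child l r n d (b : bool) :
  depth_profile (Node l r) n d ->
  depth_profile (if b then r else l) (n.+1 - d [::]) (fun k => d (b :: k) - d [::]).
Proof.
move=> [bound mono].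
have root_le : d [::] <= n by exact: bound.
split=> [k k_in | k1 k2 k1_in k2_in k1_k2].
  by have := bound (b :: k); rewrite mem_inodes_Node => /(_ k_in) /=; lia.
by rewrite leq_sub2r // mono ?mem_inodes_Node //= eqxx.
Qed.

Lemma profiles_sound t n v :
  v \in profiles t n -> exists2 d, depth_profile t n d & v = map d (inodes t).
Proof.
elim: t n v => [|l IHl r IHr] n v.
  by rewrite inE => /eqP ->; exists (fun=> 0).
case/flattenP => _ /mapP [q q_in ->] /allpairsP [[a b] [/= a_in b_in ->]].
have [dl dl_prof ->] := IHl _ _ a_in.
have [dr dr_prof ->] := IHr _ _ b_in.
have q_range : 0 < q <= n.+1 by move: q_in; rewrite mem_iota; lia.
exists (node_depth (n.+1 - q) dl dr); last exact/esym/map_node_depth.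
exact: depth_profile_Node.
Qed.

Lemma profiles_complete t n d :
  depth_profile t n d -> map d (inodes t) \in profiles t n.
Proof.
elim: t n d => [|l IHl r IHr] n d prof; first by rewrite inE.
have [bound mono] := prof; set x := d [::].
have x_le : x <= n by exact: bound.
apply/flattenP; eexists.
  by apply/mapP; exists (n.+1 - x); [rewrite mem_iota; lia | reflexivity].
rewrite (_ : n.+1 - (n.+1 - x) = x); last by lia.
apply/allpairsP; exists (map (fun k => d (false :: k) - x) (inodes l),
                         map (fun k => d (true :: k) - x) (inodes r)); split.
- exact: IHl (depth_profile_child false prof).
- exact: IHr (depth_profile_child true prof).
rewrite /= map_cat /cons_profile -!map_comp.
congr (_ :: _ ++ _); apply/eq_in_map => k k_in /=.
all: by rewrite subnKC // mono ?mem_inodes_Node.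
Qed.

Lemma size_mem_profiles t n v : v \in profiles t n -> size v = size (inodes t).
Proof. by case/profiles_sound => d _ ->; rewrite size_map. Qed.

Lemma cons_profile_inj x a1 b1 a2 b2 : size a1 = size a2 ->
  cons_profile x a1 b1 = cons_profile x a2 b2 -> a1 = a2 /\ b1 = b2.
Proof.
have inj_shift := inj_map (@addnI x).
move=> eq_size [/eqP]; rewrite eqseq_cat ?size_map //.
by case/andP => /eqP /inj_shift -> /eqP /inj_shift ->.
Qed.

Lemma uniq_flatten_key (S T : eqType) (W : S -> seq T) (key : T -> S) s :
  uniq s -> {in s, forall q, uniq (W q)} ->
  {in s, forall q, {in W q, forall v, key v = q}} -> uniq (flatten (map W s)).
Proof.
elim: s => //= q s IHs /andP [q_notin uniq_s] uniq_W key_W.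
rewrite cat_uniq uniq_W ?mem_head //= IHs //; first last.
- by move=> q' q'_in; apply: key_W; rewrite inE q'_in orbT.
- by move=> q' q'_in; apply: uniq_W; rewrite inE q'_in orbT.
rewrite andbT; apply/hasPn => v /flattenP [_ /mapP [q' q'_in ->] v_in'].
apply/negP => v_in.
have key_q : key v = q by apply: key_W; rewrite ?mem_head.
have key_q' : key v = q' by apply: key_W; rewrite ?inE ?q'_in ?orbT.
by move: q_notin; rewrite -key_q key_q' q'_in.
Qed.

Lemma uniq_profiles t n : uniq (profiles t n).
Proof.
elim: t n => [|l IHl r IHr] n //.
apply: (uniq_flatten_key (key := fun v => n.+1 - head 0 v)) => [|q _|q].
- exact: iota_uniq.
- apply: allpairs_uniq => // -[a1 b1] [a2 b2].
  move=> /allpairsP [[a1' b1'] [a1_in _ [-> ->]]] /allpairsP [[a2' b2'] [a2_in _ [-> ->]]].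
  move=> /= /cons_profile_inj [|-> ->] //.
  by rewrite (size_mem_profiles a1_in) (size_mem_profiles a2_in).
- by rewrite mem_iota => q_range _ /allpairsP [[a b] [_ _ ->]] /=; lia.
Qed.

Lemma size_profiles t n : size (profiles t n) = nhist t n.
Proof.
elim: t n => [|l IHl r IHr] n //.
rewrite profiles_Node size_flatten /shape -map_comp sumnE big_map.
by apply: eq_bigr => q _ /=; rewrite size_allpairs IHl IHr.
Qed.

Section HistoriesAsProfiles.
Variable t : tree.
Implicit Types (h : {ffun INode t -> Branch t}) (d : seq bool -> nat).

Definition depth h k : nat :=
  if insub k : option (INode t) is Some x then size (val (h x)) else 0.

Lemma depthE h (x : INode t) : depth h (val x) = size (val (h x)).
Proof. by rewrite /depth valK. Qed.

Lemma depth_profile_mch h : is_mch h -> depth_profile t 0 (depth h).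
Proof.
case/mchP => h_prefix h_mono; split=> [k k_in | k1 k2 k1_in k2_in k1_k2].
  by rewrite (depthE h (SeqSub k_in)) addn0 size_prefix.
by rewrite (depthE h (SeqSub k1_in)) (depthE h (SeqSub k2_in)) h_mono.
Qed.

Lemma mch_of_depth_profile d : depth_profile t 0 d ->
  exists2 h, is_mch h & map (depth h) (inodes t) = map d (inodes t).
Proof.
move=> [bound mono].
pose h := [ffun x : INode t => insubd (SeqSub (nodes_nil t)) (take (d (val x)) (val x))].
have hE x : val (h x) = take (d (val x)) (val x).
  rewrite ffunE insubdK //; apply: nodes_prefix_closed (prefix_take _ _) _.
  exact/inodes_sub_nodes/valP.
have size_h x : size (val (h x)) = d (val x).
  by rewrite hE size_takel // -[leqRHS]addn0; apply: bound (valP x).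
exists h.
  apply/mchP; split=> [x|x1 x2 x12]; first by rewrite hE prefix_take.
  by rewrite !size_h (mono _ _ (valP x1) (valP x2) x12).
by apply/eq_in_map => k k_in; rewrite (depthE h (SeqSub k_in)) size_h.
Qed.

Lemma mch_depth_inj h1 h2 : is_mch h1 -> is_mch h2 ->
  map (depth h1) (inodes t) = map (depth h2) (inodes t) -> h1 = h2.
Proof.
move=> mch1 mch2 /eq_in_map eq_depth; apply/ffunP => x; apply: val_inj.
apply: (prefix_size_inj (mch_prefix x mch1) (mch_prefix x mch2)).
by rewrite -(depthE h1 x) -(depthE h2 x) (eq_depth _ (valP x)).
Qed.

End HistoriesAsProfiles.

Lemma nmch_nhist t : nmch t = nhist t 0.
Proof.
rewrite /nmch -size_profiles -(size_image (fun h => map (depth h) (inodes t))).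
apply/perm_size/uniq_perm; rewrite ?uniq_profiles //.
  rewrite map_inj_in_uniq ?enum_uniq // => h1 h2.
  by rewrite !mem_enum !inE; exact: mch_depth_inj.
move=> v; apply/imageP/idP => [[h mch_h ->] | /profiles_sound [d prof_d ->]].
  exact/profiles_complete/depth_profile_mch.
by have [h mch_h <-] := mch_of_depth_profile prof_d; exists h.
Qed.

Lemma nhist_gt0 t n : 0 < nhist t n.
Proof.
elim: t n => [|l IHl r IHr] n //=.
by rewrite big_ltn // addn_gt0 muln_gt0 IHl IHr.
Qed.

Fixpoint caterpillar j : tree := if j is j'.+1 then Node (caterpillar j') Leaf else Leaf.

Fixpoint lodgepole j : tree :=
  if j is j'.+1 then Node (lodgepole j') (Node Leaf Leaf) else Leaf.

Lemma nleaves_caterpillar j : nleaves (caterpillar j) = j.+1.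
Proof. by elim: j => //= j ->; rewrite addn1. Qed.

Lemma nleaves_lodgepole j : nleaves (lodgepole j) = (2 * j).+1.
Proof. by elim: j => //= j ->; lia. Qed.

Lemma sum_pow2_le k : \sum_(q < k) 2 ^ q <= 2 ^ k.
Proof. by rewrite -[leqLHS]mul1n -[1]/(2.-1) -predn_exp leq_pred. Qed.

Lemma nhist_caterpillar_le j n : nhist (caterpillar j) n <= 2 ^ (n + 2 * j).
Proof.
elim: j n => [|j IHj] n /=; first by rewrite expn_gt0.
apply: (@leq_trans (\sum_(0 <= q < n.+2) 2 ^ q * 2 ^ (2 * j))).
  rewrite [leqRHS]big_ltn //; apply: leq_trans (leq_addl _ _); apply: leq_sum => q _.
  by rewrite muln1 -expnD IHj.
rewrite -big_distrl big_mkord (_ : n + 2 * j.+1 = n.+2 + 2 * j); last by lia.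
by rewrite expnD leq_mul2r sum_pow2_le orbT.
Qed.

Fixpoint rfact q p := if p is p'.+1 then rfact q p' * (q + p) else 1.

Fixpoint oddfact j := if j is j'.+1 then oddfact j' * (2 * j).+1 else 1.

Lemma rfactSr q p : rfact q p.+1 = rfact q p * (q + p.+1).
Proof. by []. Qed.

Lemma rfactS q p : rfact q p.+1 = q.+1 * rfact q.+1 p.
Proof.
elim: p => [|p IHp]; first by rewrite /= mul1n muln1 addn1.
by rewrite rfactSr IHp rfactSr -mulnA addnS addSn.
Qed.

Lemma leq_rfact q q' p : q <= q' -> rfact q p <= rfact q' p.
Proof. by move=> le_qq'; elim: p => //= p IHp; rewrite leq_mul // leq_add2r. Qed.

Lemma sum_rfact N p : p.+1 * \sum_(0 <= q < N.+1) rfact q p = rfact N p.+1.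
Proof.
elim: N => [|N IHN]; first by rewrite big_nat1 /= add0n mulnC.
by rewrite big_nat_recr //= mulnDr IHN rfactS /=; nia.
Qed.

Lemma oddfact_gt0 j : 0 < oddfact j.
Proof. by elim: j => //= j IHj; rewrite muln_gt0 IHj. Qed.

Lemma rfact1_double k : rfact 1 (2 * k) = oddfact k * (2 ^ k * k`!).
Proof.
elim: k => [|k IHk] //; rewrite (_ : 2 * k.+1 = (2 * k).+2); last by lia.
by rewrite /= IHk expnS factS; nia.
Qed.

Lemma nhist_cherry q : nhist (Node Leaf Leaf) q = q.+1.
Proof. by rewrite /= (eq_bigr (fun=> 1)) ?sum_nat_const_nat ?muln1 //; lia. Qed.

Lemma rfact_le_nhist_lodgepole j n : rfact n.+1 (2 * j) <= oddfact j * nhist (lodgepole j) n.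
Proof.
elim: j n => [|j IHj] n //.
rewrite (_ : 2 * j.+1 = (2 * j).+2); last by lia.
set p := (2 * j).+1; set S := \sum_(1 <= q < n.+2) rfact q p.
have le_S : S <= oddfact j * nhist (lodgepole j.+1) n.
  rewrite nhist_Node big_distrr; apply: leq_sum => q _.
  have := leq_mul (IHj q) (leqnn q.+1).
  by rewrite nhist_cherry rfactS mulnC -mulnA.
have sum_p : p.+1 * (rfact 0 p + S) = rfact n.+1 p.+1.
  by rewrite -sum_rfact [in RHS]big_ltn.
have le_head : p.+1 * p.+2 * rfact 0 p <= rfact n.+1 p.+1.
  apply: leq_trans (leq_rfact _ (isT : 0 < n.+1)).
  have -> : rfact 1 p.+1 = rfact 0 p.+2 by rewrite (rfactS 0 p.+1) mul1n.
  by rewrite !rfactSr mulnC mulnA.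
have le_R : rfact n.+1 p.+1 <= p.+2 * S by nia.
rewrite (_ : oddfact j.+1 = p.+2 * oddfact j); last by rewrite [LHS]/= mulnC mulnS.
by rewrite -mulnA (leq_trans le_R) // leq_mul2l le_S orbT.
Qed.

Lemma fact_le_nhist_lodgepole k : 2 ^ k * k`! <= nhist (lodgepole k) 0.
Proof.
by rewrite -(leq_pmul2l (oddfact_gt0 k)) -rfact1_double rfact_le_nhist_lodgepole.
Qed.

Lemma hplus_ge k hp : is_hplus (2 * k).+1 hp -> 2 ^ k * k`! <= hp.
Proof.
case=> _ hp_max; rewrite (leq_trans (fact_le_nhist_lodgepole k)) // -nmch_nhist.
by rewrite hp_max ?nleaves_lodgepole.
Qed.

Lemma hminus_le k hm : is_hminus (2 * k).+1 hm -> 0 < hm <= 16 ^ k.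
Proof.
case=> [[t [_ <-]] hm_min]; rewrite {1}nmch_nhist nhist_gt0 /=.
rewrite (leq_trans (hm_min _ (nleaves_caterpillar (2 * k)))) // nmch_nhist.
by rewrite (leq_trans (nhist_caterpillar_le _ _)) // add0n mulnA expnM.
Qed.

Lemma INR_expn a n : INR (a ^ n) = pow (INR a) n.
Proof. by rewrite -pow_INR; congr INR; elim: n => // n IHn; rewrite expnS IHn. Qed.

Lemma factorial_fact n : n`! = fact n.
Proof. by elim: n => //= n IHn; rewrite factS IHn. Qed.

From Stdlib Require Import Rdefinitions.

Theorem corollary2 (m hp hm : nat) :
  odd m -> 7 <= m -> is_hplus m hp -> is_hminus m hm ->
  (pow (sqrt (INR m - 1) / (4 * sqrt (exp 1))) m
     <= INR hp / INR hm)%R.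
Proof.
move=> odd_m m_ge7.
have [k def_m] : exists k, m = (2 * k).+1.
  by exists m./2; rewrite -[m in LHS]odd_double_half odd_m add1n -mul2n.
have k_gt0 : (1 <= k)%coq_nat by apply/leP; lia.
rewrite def_m => /hplus_ge hp_ge /hminus_le /andP [hm_gt0 hm_le].
rewrite -addn1; apply: Rle_trans (sqrt_ratio_pow_le k k_gt0) _.
apply: Rdiv_le_compat.
- by apply: Rmult_le_pos (pow_le _ _ _) (pos_INR _); lra.
- by move/leP/le_INR: hp_ge; rewrite mult_INR INR_expn factorial_fact.
- exact/lt_0_INR/ltP.
- by move/leP/le_INR: hm_le; rewrite INR_expn (INR_IZR_INZ 16).
Qed.
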